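(* Let $(M^4,\widetilde g)$ be the Walker $4$-manifold of the context, let $f$ be a smooth function on $M^4$ depending only on $(u,v)$, let $Y$ be a smooth vector field with $\operatorname{div}(Y)=0$, and let $X=\nabla f+Y$. If $(M^4,\widetilde g,X,\lambda,\beta_1,\beta_2)$ is a Ricci–Yamabe soliton, then it is steady, i.e. $\lambda=0$.
   Context: $M^4$ is a smooth $4$-manifold with coordinates $(x,y,u,v)$ and metric \[ \widetilde g=\begin{pmatrix}0&0&1&0\\0&0&0&1\\1&0&F&0\\0&1&0&F\end{pmatrix},\qquad F(x,y,u,v)=x\,a(u,v)+y\,b(u,v)+c(u,v), \] with $a,b,c$ smooth real functions of $(u,v)$ only. For $\widetilde g$, $R=0$ and the only nonzero Ricci components are $R_{33}=\tfrac12 b^2-b_v$, $R_{34}=R_{43}=\tfrac12(-ab+a_v+b_u)$, $R_{44}=\tfrac12 a^2-a_u$. $\nabla f$ is the gradient and $\mathcal{L}_X$ the Lie derivative. A Ricci–Yamabe soliton $(M^4,\widetilde g,X,\lambda,\beta_1,\beta_2)$ consists of a smooth vector field $X$ and real constants $\lambda,\beta_1,\beta_2$ with $2\beta_1\mathrm{Ric}+\mathcal{L}_X\widetilde g=(-2\lambda+\beta_2R)\widetilde g$; it is steady if $\lambda=0$. *)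

From HB Require Import structures.
From mathcomp Require Import all_boot all_order all_algebra.
From mathcomp Require Import all_classical all_reals all_analysis.
Set Implicit Arguments. Unset Strict Implicit. Unset Printing Implicit Defensive.
Import Order.TTheory GRing.Theory Num.Theory.
Import numFieldNormedType.Exports.
Local Open Scope ring_scope.

Section Walker.
Variable R : realType.

Definition pt4 := 'rV[R]_4.
Definition xc (p : pt4) := p 0 0.
Definition yc (p : pt4) := p 0 1.
Definition uc (p : pt4) := p 0 2%:R.
Definition vc (p : pt4) := p 0 3%:R.

Definition ebasis (i : 'I_4) : pt4 := delta_mx 0 i.

Definition pd (i : 'I_4) (f : pt4 -> R) : pt4 -> R :=
  fun p => derive f p (ebasis i).

Definition iterD (s : seq 'I_4) (f : pt4 -> R) : pt4 -> R := foldr pd f s.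

Definition smooth (f : pt4 -> R) : Prop :=
  forall (s : seq 'I_4) (p : pt4), differentiable (iterD s f) p.

(* vector fields are given by their components in the coordinate frame *)
Definition vfield := 'I_4 -> pt4 -> R.

Variables a b c : R -> R -> R.

Definition Fw (p : pt4) : R := xc p * a (uc p) (vc p) + yc p * b (uc p) (vc p) + c (uc p) (vc p).

(* the Walker metric  [[0,0,1,0],[0,0,0,1],[1,0,F,0],[0,1,0,F]] *)
Definition gmat (p : pt4) : 'M[R]_4 :=
  \matrix_(i < 4, j < 4)
    if [|| ((i : nat) == 0%N) && ((j : nat) == 2%N), ((i : nat) == 2%N) && ((j : nat) == 0%N),
           ((i : nat) == 1%N) && ((j : nat) == 3%N) | ((i : nat) == 3%N) && ((j : nat) == 1%N)]
    then 1
    else if ((i : nat) == (j : nat)) && (2 <= (i : nat))%N then Fw p else 0.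

Definition gw (i j : 'I_4) : pt4 -> R := fun p => gmat p i j.
Definition ginv (p : pt4) : 'M[R]_4 := invmx (gmat p).

Definition Gam (k i j : 'I_4) : pt4 -> R := fun p =>
  2^-1 * \sum_(l < 4) ginv p k l * (pd i (gw j l) p + pd j (gw i l) p - pd l (gw i j) p).

Definition Ric (i j : 'I_4) : pt4 -> R := fun p =>
  \sum_(k < 4) (pd k (Gam k i j) p - pd j (Gam k i k) p)
  + \sum_(k < 4) \sum_(l < 4) (Gam k k l p * Gam l i j p - Gam k j l p * Gam l i k p).

Definition scal : pt4 -> R := fun p =>
  \sum_(i < 4) \sum_(j < 4) ginv p i j * Ric i j p.

Definition grad (f : pt4 -> R) : vfield := fun i p =>
  \sum_(j < 4) ginv p i j * pd j f p.

Definition div (Y : vfield) : pt4 -> R := fun p =>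
  \sum_(i < 4) (pd i (Y i) p + \sum_(k < 4) Gam i i k p * Y k p).

Definition lieg (X : vfield) (i j : 'I_4) : pt4 -> R := fun p =>
  \sum_(k < 4) (X k p * pd k (gw i j) p + gw k j p * pd i (X k) p + gw i k p * pd j (X k) p).

Definition ricci_yamabe_soliton (X : vfield) (lambda beta1 beta2 : R) : Prop :=
  forall (i j : 'I_4) (p : pt4),
    2 * beta1 * Ric i j p + lieg X i j p = (- (2 * lambda) + beta2 * scal p) * gw i j p.

End Walker.

From HB Require Import structures.
From mathcomp Require Import all_boot all_order all_algebra.
From mathcomp Require Import all_classical all_reals all_analysis.
Import Order.TTheory GRing.Theory Num.Theory.
Import numFieldNormedType.Exports.
From mathcomp Require Import ring.
Local Open Scope ring_scope.

(* Tracing the soliton equation with g^-1 gives 2 beta1 R + 2 div X = 4 (-2 lambda + beta2 R),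
   because tr_g (L_X g) = 2 div X for any metric.  For the Walker metric the Ricci tensor vanishes
   wherever g^-1 does not, so R = 0; the Christoffel traces Gamma^i_ik vanish (g^-1 is zero on the
   block where g depends on the point), so div is the flat divergence; and for f = f(u,v) the
   gradient is (f_u, f_v, 0, 0), whose flat divergence is f_ux + f_vy = 0.  Hence
   div X = div (grad f) + div Y = 0 and lambda = 0. *)

Section LineDerivative.
Context {R : realType} {V W : normedModType R}.
Local Open Scope classical_set_scope.

Lemma derive_affine_line (f : V -> W) (p v : V) (k : W) :
  (forall h : R, f (h *: v + p) = f p + h *: k) ->
  derivable f p v /\ 'D_v f p = k.
Proof.
move=> fE.
have quotE : \forall h \near (0 : R)^', h^-1 *: ((f \o shift p) (h *: v) - f p) = k.
  near=> h.
  have h0 : h != 0 by near: h; exact: nbhs_dnbhs_neq.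
  by rewrite /= fE addrC addKr scalerA mulVf // scale1r.
split; last exact: lim_near_cst.
by apply/cvg_ex; exists k; exact: cvg_near_cst.
Unshelve. all: by end_near.
Qed.

Lemma derive_const_line (f : V -> W) (p v : V) :
  (forall h : R, f (h *: v + p) = f p) -> derivable f p v /\ 'D_v f p = 0.
Proof. by move=> fE; apply: derive_affine_line => h; rewrite fE scaler0 addr0. Qed.

End LineDerivative.

Section PartialDerivatives.
Context {R : realType}.
Implicit Types (f g : pt4 R -> R) (p : pt4 R) (i : 'I_4).

Lemma pdD {i f g p} : derivable f p (ebasis R i) -> derivable g p (ebasis R i) ->
  pd i (fun q => f q + g q) p = pd i f p + pd i g p.
Proof. exact: deriveD. Qed.

Lemma pdB {i f g p} : derivable f p (ebasis R i) -> derivable g p (ebasis R i) ->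
  pd i (fun q => f q - g q) p = pd i f p - pd i g p.
Proof. exact: deriveB. Qed.

Lemma pdZ {i} (k : R) {f p} : derivable f p (ebasis R i) ->
  pd i (fun q => k * f q) p = k * pd i f p.
Proof. exact: deriveZ. Qed.

Lemma pdM {i f g p} : derivable f p (ebasis R i) -> derivable g p (ebasis R i) ->
  pd i (fun q => f q * g q) p = f p * pd i g p + g p * pd i f p.
Proof. exact: deriveM. Qed.

Lemma pd_sum {i n} {h : 'I_n -> pt4 R -> R} {p} :
  (forall m, derivable (h m) p (ebasis R i)) ->
  pd i (fun q => \sum_(m < n) h m q) p = \sum_(m < n) pd i (h m) p.
Proof.
move=> dh; rewrite /pd -(derive_sum dh); congr derive.
by apply/funext => q; rewrite fct_sumE.
Qed.

Lemma derivable_pdD {i f g p} : derivable f p (ebasis R i) -> derivable g p (ebasis R i) ->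
  derivable (fun q => f q + g q) p (ebasis R i).
Proof. exact: derivableD. Qed.

Lemma derivable_pdB {i f g p} : derivable f p (ebasis R i) -> derivable g p (ebasis R i) ->
  derivable (fun q => f q - g q) p (ebasis R i).
Proof. exact: derivableB. Qed.

Lemma derivable_pdZ {i} (k : R) {f p} : derivable f p (ebasis R i) ->
  derivable (fun q => k * f q) p (ebasis R i).
Proof. exact: derivableZ. Qed.

Lemma derivable_pdM {i f g p} : derivable f p (ebasis R i) -> derivable g p (ebasis R i) ->
  derivable (fun q => f q * g q) p (ebasis R i).
Proof. exact: derivableM. Qed.

Lemma derivable_pd_sum {i n} {h : 'I_n -> pt4 R -> R} {p} :
  (forall m, derivable (h m) p (ebasis R i)) ->
  derivable (fun q => \sum_(m < n) h m q) p (ebasis R i).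
Proof.
move=> dh; have := derivable_sum dh.
by rewrite (_ : \sum_(m < n) h m = fun q => \sum_(m < n) h m q) // funeqE => q; rewrite fct_sumE.
Qed.

Lemma smooth_derivable {f} : smooth f -> forall p v, derivable f p v.
Proof. by move=> sf p v; apply/diff_derivable/(sf [::]). Qed.

Lemma smooth_derivable_pd {f} : smooth f -> forall i p v, derivable (pd i f) p v.
Proof. by move=> sf i p v; apply/diff_derivable/(sf [:: i]). Qed.

End PartialDerivatives.

Section FunctionsOfUV.
Context {R : realType}.
Implicit Types (h : pt4 R -> R) (p : pt4 R).

Lemma ebasis_shiftE (t : R) (i j : 'I_4) p :
  (t *: ebasis R i + p) 0 j = t * (i == j)%:R + p 0 j.
Proof. by rewrite !mxE /= eq_sym. Qed.

Definition depends_on_uv h := forall p q, uc p = uc q -> vc p = vc q -> h p = h q.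

Lemma depends_on_uv_shift h (t : R) (i : 'I_4) p :
  depends_on_uv h -> (i < 2)%N -> h (t *: ebasis R i + p) = h p.
Proof.
by move=> hE; case: i => -[|[|//]] ? _; apply: hE; rewrite /uc /vc ebasis_shiftE mulr0 add0r.
Qed.

Lemma pd_depends_on_uv {h} : depends_on_uv h ->
  forall (i : 'I_4) p, (i < 2)%N -> derivable h p (ebasis R i) /\ pd i h p = 0.
Proof. by move=> hE i p i2; apply: derive_const_line => t; apply: depends_on_uv_shift. Qed.

Lemma depends_on_uv_pd {h} : depends_on_uv h -> forall i, depends_on_uv (pd i h).
Proof.
move=> hE i p q Eu Ev; rewrite /pd /derive.
suff -> : (fun t : R => t^-1 *: ((h \o shift p) (t *: ebasis R i) - h p)) =
          (fun t : R => t^-1 *: ((h \o shift q) (t *: ebasis R i) - h q)) by [].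
apply/funext => t /=; rewrite (hE p q) // (hE (t *: ebasis R i + p) (t *: ebasis R i + q)) //.
  by rewrite /uc !ebasis_shiftE -!/(uc _) Eu.
by rewrite /vc !ebasis_shiftE -!/(vc _) Ev.
Qed.

Lemma pd_coord (i j : 'I_4) p :
  derivable (fun q : pt4 R => q 0 j) p (ebasis R i) /\ pd i (fun q => q 0 j) p = (i == j)%:R.
Proof. by apply: derive_affine_line => t; rewrite ebasis_shiftE addrC. Qed.

End FunctionsOfUV.

Ltac case_ord4 i := case: i => -[|[|[|[|//]]]] ?.

Section WalkerMetric.
Context {R : realType} (a b c : R -> R -> R).
Implicit Types (p : pt4 R) (i j k : 'I_4).

(* The metric pairs the coordinate x with u and y with v. *)
Definition dual_pair (i j : nat) : bool :=
  [|| (i == 0) && (j == 2), (i == 2) && (j == 0), (i == 1) && (j == 3) | (i == 3) && (j == 1)].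

Definition walker_inv (F : R) : 'M[R]_4 :=
  \matrix_(i < 4, j < 4)
    if dual_pair i j then 1 else if (i < 2)%N && (i == j :> nat) then - F else 0.

Lemma gwE i j p :
  gw a b c i j p = if (i == j :> nat) && (2 <= i)%N then Fw a b c p else (dual_pair i j)%:R.
Proof. by rewrite /gw /gmat mxE; case_ord4 i; case_ord4 j. Qed.

Lemma gw_sym i j : gw a b c i j = gw a b c j i.
Proof. by apply/funext => p; rewrite !gwE; case_ord4 i; case_ord4 j. Qed.

Lemma gmat_walker_inv p : gmat a b c p *m walker_inv (Fw a b c p) = 1%:M.
Proof.
apply/matrixP => i j; rewrite !mxE !big_ord_recl big_ord0 !mxE.
by case_ord4 i; case_ord4 j; rewrite /= ?mxE /=; ring.
Qed.

Lemma ginvE p : ginv a b c p = walker_inv (Fw a b c p).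
Proof.
have [gU _] := mulmx1_unit (gmat_walker_inv p).
by rewrite /ginv -[RHS]mul1mx -(mulVmx gU) -mulmxA gmat_walker_inv mulmx1.
Qed.

Lemma ginv_sym p i j : ginv a b c p i j = ginv a b c p j i.
Proof. by rewrite ginvE !mxE; case_ord4 i; case_ord4 j. Qed.

Lemma gmat_ginv p : gmat a b c p *m ginv a b c p = 1%:M.
Proof. by rewrite ginvE gmat_walker_inv. Qed.

Lemma ginv_gmat p : ginv a b c p *m gmat a b c p = 1%:M.
Proof. by rewrite ginvE; apply/mulmx1C/gmat_walker_inv. Qed.

Lemma pd_gw i j k p :
  pd k (gw a b c i j) p = ((i == j :> nat) && (2 <= i)%N)%:R * pd k (Fw a b c) p.
Proof.
have -> : gw a b c i j = fun q => if (i == j :> nat) && (2 <= i)%N then Fw a b c q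
                                   else (dual_pair i j)%:R.
  by apply/funext => q; rewrite gwE.
case: (_ && _); first by rewrite mul1r.
rewrite mul0r.
by have [] := derive_const_line (fun _ => (dual_pair i j)%:R : R) p (ebasis R k) (fun=> erefl).
Qed.

End WalkerMetric.

Section TraceIdentities.
Context {R : realType} {a b c : R -> R -> R}.
Implicit Types (p : pt4 R) (i j k l : 'I_4) (X : vfield R).
Local Notation g := (gw a b c).
Local Notation ginv := (ginv a b c).

Lemma sum_ginv_gw p i k : \sum_j ginv p i j * g j k p = (i == k)%:R.
Proof. by have /matrixP/(_ i k) := ginv_gmat a b c p; rewrite !mxE. Qed.

Lemma sum_gw_ginv p i k : \sum_j g i j p * ginv p j k = (i == k)%:R.
Proof. by have /matrixP/(_ i k) := gmat_ginv a b c p; rewrite !mxE. Qed.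

Lemma sum_delta_r (F : 'I_4 -> R) i : \sum_k (k == i)%:R * F k = F i.
Proof.
by rewrite (bigD1 i) //= eqxx mul1r big1 ?addr0 // => k /negbTE ->; rewrite mul0r.
Qed.

Lemma sum_delta_l (F : 'I_4 -> R) i : \sum_k (i == k)%:R * F k = F i.
Proof. by under eq_bigr do rewrite eq_sym; apply: sum_delta_r. Qed.

Lemma Gam_trace p k :
  \sum_i Gam a b c i i k p = 2^-1 * \sum_i \sum_l ginv p i l * pd k (g i l) p.
Proof.
have swap : \sum_i \sum_l ginv p i l * pd l (g i k) p =
            \sum_i \sum_l ginv p i l * pd i (g k l) p.
  rewrite exchange_big; apply: eq_bigr => i _; apply: eq_bigr => l _.
  by rewrite ginv_sym gw_sym.
rewrite /Gam -mulr_sumr; congr (_ * _).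
transitivity (\sum_i \sum_l ginv p i l * pd i (g k l) p
              + \sum_i \sum_l ginv p i l * pd k (g i l) p
              - \sum_i \sum_l ginv p i l * pd l (g i k) p).
  rewrite -big_split -sumrB; apply: eq_bigr => i _.
  by rewrite -big_split -sumrB; apply: eq_bigr => l _; rewrite mulrBr mulrDr.
by rewrite swap addrC addKr.
Qed.

Lemma lieg_trace X p :
  \sum_i \sum_j ginv p i j * lieg a b c X i j p = 2 * div a b c X p.
Proof.
transitivity (\sum_k X k p * \sum_i \sum_j ginv p i j * pd k (g i j) p
   + \sum_i \sum_k (\sum_j ginv p i j * g j k p) * pd i (X k) p
   + \sum_j \sum_k (\sum_i g k i p * ginv p i j) * pd j (X k) p).
  transitivity (\sum_i \sum_j \sum_k ginv p i j * (X k p * pd k (g i j) p)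
     + \sum_i \sum_j \sum_k ginv p i j * (g k j p * pd i (X k) p)
     + \sum_i \sum_j \sum_k ginv p i j * (g i k p * pd j (X k) p)).
    rewrite -!big_split; apply: eq_bigr => i _; rewrite -!big_split; apply: eq_bigr => j _.
    by rewrite mulr_sumr -!big_split; apply: eq_bigr => k _; rewrite !mulrDr.
  congr (_ + _ + _).
  - under eq_bigr do rewrite exchange_big; rewrite exchange_big.
    apply: eq_bigr => k _; rewrite mulr_sumr; apply: eq_bigr => i _.
    by rewrite mulr_sumr; apply: eq_bigr => j _; rewrite mulrCA.
  - apply: eq_bigr => i _; rewrite exchange_big; apply: eq_bigr => k _.
    by rewrite mulr_suml; apply: eq_bigr => j _; rewrite mulrA gw_sym.
  - rewrite exchange_big; apply: eq_bigr => j _; rewrite exchange_big.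
    apply: eq_bigr => k _; rewrite mulr_suml; apply: eq_bigr => i _.
    by rewrite mulrA (mulrC (ginv p i j)) gw_sym.
under [X in _ + X + _]eq_bigr do under eq_bigr do rewrite sum_ginv_gw.
under [X in _ + X]eq_bigr do under eq_bigr do rewrite sum_gw_ginv.
under [X in _ + X + _]eq_bigr do rewrite sum_delta_l.
under [X in _ + X]eq_bigr do rewrite sum_delta_r.
rewrite /div big_split /= exchange_big /=.
under [X in _ = 2 * (_ + X)]eq_bigr do rewrite -mulr_suml Gam_trace.
rewrite mulrDr [in RHS]mulr_natl [in RHS]mulr2n [in RHS]addrC -addrA; congr (_ + _).
rewrite mulr_sumr; apply: eq_bigr => k _.
by rewrite mulrA mulrA mulfV ?pnatr_eq0 // mul1r mulrC.
Qed.

Lemma trace_gw p : \sum_i \sum_j ginv p i j * g i j p = 4.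
Proof.
under eq_bigr do under eq_bigr do rewrite gw_sym.
by under eq_bigr do rewrite sum_ginv_gw eqxx; rewrite sumr_const card_ord.
Qed.

Lemma ricci_yamabe_soliton_trace {X lambda beta1 beta2} :
  ricci_yamabe_soliton a b c X lambda beta1 beta2 -> forall p,
  2 * beta1 * scal a b c p + 2 * div a b c X p = 4 * (- (2 * lambda) + beta2 * scal a b c p).
Proof.
move=> sol p; rewrite -lieg_trace -(trace_gw p).
transitivity (\sum_i \sum_j ginv p i j * (2 * beta1 * Ric a b c i j p + lieg a b c X i j p)).
  rewrite /scal mulr_sumr -big_split; apply: eq_bigr => i _.
  by rewrite mulr_sumr -big_split; apply: eq_bigr => j _ /=; ring.
rewrite mulr_suml; apply: eq_bigr => i _; rewrite mulr_suml; apply: eq_bigr => j _.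
by rewrite sol; ring.
Qed.

End TraceIdentities.

Section WalkerDivergence.
Context {R : realType} (a b c : R -> R -> R).
Implicit Types (p : pt4 R) (X : vfield R) (f : pt4 R -> R).

Lemma Gam_trace_walker k p : \sum_i Gam a b c i i k p = 0.
Proof.
rewrite Gam_trace big1 ?mulr0 // => i _; rewrite big1 // => l _.
by rewrite ginvE pd_gw !mxE; case_ord4 i; case_ord4 l; rewrite /= ?mul0r ?mulr0.
Qed.

Lemma div_walkerE X p : div a b c X p = \sum_i pd i (X i) p.
Proof.
rewrite /div big_split /= exchange_big [X in _ + X]big1 ?addr0 // => k _.
by rewrite -mulr_suml Gam_trace_walker mul0r.
Qed.

Lemma div_walkerD X1 X2 p :
  (forall i, derivable (X1 i) p (ebasis R i)) -> (forall i, derivable (X2 i) p (ebasis R i)) ->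
  div a b c (fun i q => X1 i q + X2 i q) p = div a b c X1 p + div a b c X2 p.
Proof.
move=> dX1 dX2; rewrite !div_walkerE -big_split; apply: eq_bigr => i _.
exact: pdD.
Qed.

Lemma dual_pair_lt2 {i j : 'I_4} : dual_pair i j -> (2 <= j)%N -> (i < 2)%N.
Proof. by case_ord4 i; case_ord4 j. Qed.

Lemma grad_walker_uv f i : depends_on_uv f ->
  grad a b c f i = fun q => \sum_(j < 4) ((2 <= j)%N && dual_pair i j)%:R * pd j f q.
Proof.
move=> fE; apply/funext => q; apply: eq_bigr => j _; rewrite ginvE mxE.
have [j2|j2] := ltnP j 2; first by rewrite (pd_depends_on_uv fE j q j2).2 !mulr0.
case: (dual_pair i j) => //=; case: eqP => [->|_]; last by rewrite andbF mul0r.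
by rewrite ltnNge j2 /= mul0r.
Qed.

Lemma derivable_grad_walker_uv f i p : smooth f -> depends_on_uv f ->
  derivable (grad a b c f i) p (ebasis R i).
Proof.
move=> sf fE; rewrite grad_walker_uv //; apply: derivable_pd_sum => j.
by apply: derivable_pdZ; exact: smooth_derivable_pd.
Qed.

Lemma div_grad_walker_uv f p : smooth f -> depends_on_uv f -> div a b c (grad a b c f) p = 0.
Proof.
move=> sf fE; rewrite div_walkerE big1 // => i _; rewrite grad_walker_uv //.
rewrite pd_sum => [|j]; last by apply: derivable_pdZ; exact: smooth_derivable_pd.
apply: big1 => j _; rewrite pdZ; last exact: smooth_derivable_pd.
case: (ltnP j 2) => [|j2]; first by rewrite mul0r.
case dij: (dual_pair i j); last by rewrite andbF mul0r.
by rewrite (pd_depends_on_uv (depends_on_uv_pd fE j) i p (dual_pair_lt2 dij j2)).2 mulr0.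
Qed.

End WalkerDivergence.

Section WalkerPotential.
Context {R : realType} (a b c : R -> R -> R).
Implicit Types (p : pt4 R) (i m n : 'I_4).
Let A p := a (uc p) (vc p).
Let B p := b (uc p) (vc p).
Let C p := c (uc p) (vc p).
Hypotheses (sA : smooth A) (sB : smooth B) (sC : smooth C).

Lemma depends_on_uv_coeff (h : R -> R -> R) : depends_on_uv (fun p => h (uc p) (vc p)).
Proof. by move=> p q -> ->. Qed.

Let Fw_split : Fw a b c = fun q => q 0 0 * A q + q 0 1 * B q + C q.
Proof. by []. Qed.

Lemma pd_FwE i : pd i (Fw a b c) = fun p =>
  p 0 0 * pd i A p + (i == 0)%:R * A p + (p 0 1 * pd i B p + (i == 1)%:R * B p) + pd i C p.
Proof.
apply/funext => p; have [dx x'] := pd_coord i 0 p; have [dy y'] := pd_coord i 1 p.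
have dA := smooth_derivable sA p (ebasis R i); have dB := smooth_derivable sB p (ebasis R i).
have dC := smooth_derivable sC p (ebasis R i).
have dxA := derivable_pdM dx dA; have dyB := derivable_pdM dy dB.
rewrite Fw_split (pdD (derivable_pdD dxA dyB) dC) (pdD dxA dyB) (pdM dx dA) (pdM dy dB) x' y'.
by ring.
Qed.

Lemma derivable_Fw i p : derivable (Fw a b c) p (ebasis R i).
Proof.
have [dx _] := pd_coord i 0 p; have [dy _] := pd_coord i 1 p.
have dA := smooth_derivable sA p (ebasis R i); have dB := smooth_derivable sB p (ebasis R i).
rewrite Fw_split; apply: derivable_pdD (smooth_derivable sC p _).
exact: derivable_pdD (derivable_pdM dx dA) (derivable_pdM dy dB).
Qed.

Lemma derivable_pd_Fw m i p : derivable (pd m (Fw a b c)) p (ebasis R i).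
Proof.
have [dx _] := pd_coord i 0 p; have [dy _] := pd_coord i 1 p.
have dA := smooth_derivable sA p (ebasis R i); have dB := smooth_derivable sB p (ebasis R i).
have dA' := smooth_derivable_pd sA m p (ebasis R i).
have dB' := smooth_derivable_pd sB m p (ebasis R i).
rewrite pd_FwE; apply: derivable_pdD (smooth_derivable_pd sC m p _).
apply: derivable_pdD.
  exact: derivable_pdD (derivable_pdM dx dA') (derivable_pdZ _ dA).
exact: derivable_pdD (derivable_pdM dy dB') (derivable_pdZ _ dB).
Qed.

Lemma pd_Fw_xy m : (m < 2)%N -> pd m (Fw a b c) = fun p => (m == 0)%:R * A p + (m == 1)%:R * B p.
Proof.
move=> m2; rewrite pd_FwE; apply/funext => p.
rewrite (pd_depends_on_uv (depends_on_uv_coeff a) m p m2).2.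
rewrite (pd_depends_on_uv (depends_on_uv_coeff b) m p m2).2.
by rewrite (pd_depends_on_uv (depends_on_uv_coeff c) m p m2).2; ring.
Qed.

Lemma pd_pd_Fw_xy m n p : (m < 2)%N -> (n < 2)%N -> pd n (pd m (Fw a b c)) p = 0.
Proof.
move=> m2 n2; rewrite pd_Fw_xy //; apply: (pd_depends_on_uv _ n p n2).2.
by move=> q q' Eu Ev; rewrite /A /B Eu Ev.
Qed.

End WalkerPotential.

Section WalkerCurvature.
Context {R : realType}.
Implicit Types (dF : nat -> R) (ddF : nat -> nat -> R).

(* Indices are natural numbers so that case analysis produces numerals; [dF m] stands for
   d_m F.  Only g_uu = g_vv = F vary, and g^-1 is 1 on dual pairs and -F at (x,x), (y,y), so
   Gamma^k_ij = 1/2 g^kl (d_i g_jl + d_j g_il - d_l g_ij) reduces to the formula below. *)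
Definition dual_index (k : nat) : nat := if (k < 2)%N then (k + 2)%N else (k - 2)%N.

Definition christoffel_walker (F0 : R) dF (k i j : nat) : R :=
  2^-1 * ([&& j == dual_index k & 2 <= j]%N%:R * dF i
          + [&& i == dual_index k & 2 <= i]%N%:R * dF j
          - [&& i == j & 2 <= i]%N%:R * dF (dual_index k)
          + [&& i == j, 2 <= i & k < 2]%N%:R * (F0 * dF k)).

Definition christoffel_walker_pd (F0 : R) dF (ddFn : nat -> R) (n k i j : nat) : R :=
  2^-1 * ([&& j == dual_index k & 2 <= j]%N%:R * ddFn i
          + [&& i == dual_index k & 2 <= i]%N%:R * ddFn j
          - [&& i == j & 2 <= i]%N%:R * ddFn (dual_index k)
          + [&& i == j, 2 <= i & k < 2]%N%:R * (F0 * ddFn k + dF k * dF n)).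

Definition ricci_walker (F0 : R) dF ddF (i j : nat) : R :=
  \sum_(0 <= k < 4) (christoffel_walker_pd F0 dF (ddF k) k k i j
                     - christoffel_walker_pd F0 dF (ddF j) j k i k)
  + \sum_(0 <= k < 4) \sum_(0 <= l < 4)
      (christoffel_walker F0 dF k k l * christoffel_walker F0 dF l i j
       - christoffel_walker F0 dF k j l * christoffel_walker F0 dF l i k).

Lemma ricci_walker_eq0 (F0 : R) dF ddF (i j : nat) :
  ddF 0%N 0%N = 0 -> ddF 1%N 1%N = 0 -> dual_pair i j || (i < 2)%N && (i == j) ->
  ricci_walker F0 dF ddF i j = 0.
Proof.
move=> dd00 dd11; rewrite /ricci_walker /index_iota /= !big_cons !big_nil.
rewrite /christoffel_walker_pd /christoffel_walker /dual_index /=.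
by case: i => [|[|[|[|i]]]]; case: j => [|[|[|[|j]]]] //= _; rewrite ?dd00 ?dd11; ring.
Qed.

Lemma pd_christoffel_walker (G : pt4 R -> R) (dG : nat -> pt4 R -> R)
    (n : 'I_4) (k i j : nat) p :
  derivable G p (ebasis R n) -> (forall m, derivable (dG m) p (ebasis R n)) ->
  pd n G p = dG n p ->
  pd n (fun q => christoffel_walker (G q) (dG^~ q) k i j) p =
  christoffel_walker_pd (G p) (dG^~ p) (fun m => pd n (dG m) p) n k i j.
Proof.
move=> dG0 dd dGn.
have dGk := derivable_pdM dG0 (dd k).
have dGi := derivable_pdZ [&& j == dual_index k & 2 <= j]%N%:R (dd i).
have dGj := derivable_pdZ [&& i == dual_index k & 2 <= i]%N%:R (dd j).
have dGs := derivable_pdZ [&& i == j & 2 <= i]%N%:R (dd (dual_index k)).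
have dGq := derivable_pdZ [&& i == j, 2 <= i & k < 2]%N%:R dGk.
have dij := derivable_pdD dGi dGj; have dijs := derivable_pdB dij dGs.
rewrite /christoffel_walker (pdZ _ (derivable_pdD dijs dGq)) (pdD dijs dGq) (pdB dij dGs).
rewrite (pdD dGi dGj) (pdZ _ (dd i)) (pdZ _ (dd j)) (pdZ _ (dd (dual_index k))) (pdZ _ dGk).
by rewrite (pdM dG0 (dd k)) dGn.
Qed.

End WalkerCurvature.

Section WalkerRicci.
Context {R : realType} (a b c : R -> R -> R).
Implicit Types (p : pt4 R) (i j k l n : 'I_4).
Local Notation F := (Fw a b c).
Local Notation dF p := (fun m : nat => pd (inord m) F p).

Lemma Gam_walkerE k i j p : Gam a b c k i j p = christoffel_walker (F p) (dF p) k i j.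
Proof.
set d := dF p; have dFE m : pd m F p = d m by rewrite /d inord_val.
rewrite /Gam; under eq_bigr do rewrite !pd_gw !dFE ginvE.
rewrite !big_ord_recl big_ord0 !mxE /christoffel_walker /dual_index.
(* Abstracting F p and its derivatives keeps the 64 computations below small. *)
clearbody d; move: (F p) => F0.
by case_ord4 k; case_ord4 i; case_ord4 j; rewrite /=; ring.
Qed.

Section SmoothCoefficients.
Hypotheses (sA : smooth (fun p => a (uc p) (vc p))) (sB : smooth (fun p => b (uc p) (vc p)))
  (sC : smooth (fun p => c (uc p) (vc p))).

Lemma pd_Gam_walker n k i j p :
  pd n (Gam a b c k i j) p =
  christoffel_walker_pd (F p) (dF p) (fun m => pd n (pd (inord m) F) p) n k i j.
Proof.
have -> : Gam a b c k i j = fun q => christoffel_walker (F q) (dF q) k i j.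
  by apply/funext => q; rewrite Gam_walkerE.
apply: (pd_christoffel_walker F (fun m => pd (inord m) F)); first exact: derivable_Fw.
- by move=> m; apply: derivable_pd_Fw.
- by rewrite inord_val.
Qed.

Lemma Ric_walkerE i j p : Ric a b c i j p =
  ricci_walker (F p) (dF p) (fun n m : nat => pd (inord n) (pd (inord m) F) p) i j.
Proof.
rewrite /Ric /ricci_walker; congr (_ + _); rewrite big_mkord; apply: eq_bigr => k _.
  by rewrite !pd_Gam_walker !inord_val.
by rewrite big_mkord; apply: eq_bigr => l _; rewrite !Gam_walkerE.
Qed.

Lemma scal_walker_eq0 p : scal a b c p = 0.
Proof.
have ddF0 m : (m < 2)%N -> pd (inord m) (pd (inord m) F) p = 0.
  by move=> m2; apply: pd_pd_Fw_xy; rewrite // inordK // (ltn_trans m2).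
rewrite /scal big1 // => i _; rewrite big1 // => j _; rewrite ginvE mxE.
case: ifP => [ij|_]; last case: ifP => [ij|_]; last by rewrite mul0r.
- by rewrite Ric_walkerE ricci_walker_eq0 ?ij ?ddF0 ?mulr0.
- by rewrite Ric_walkerE ricci_walker_eq0 ?ij ?orbT ?ddF0 ?mulr0.
Qed.

End SmoothCoefficients.
End WalkerRicci.

Theorem mainTheorem6 (R : realType) (a b c : R -> R -> R)
  (f : pt4 R -> R) (Y : vfield R) (lambda beta1 beta2 : R) :
  smooth (fun p : pt4 R => a (uc p) (vc p)) ->
  smooth (fun p : pt4 R => b (uc p) (vc p)) ->
  smooth (fun p : pt4 R => c (uc p) (vc p)) ->
  smooth f ->
  (forall p q : pt4 R, uc p = uc q -> vc p = vc q -> f p = f q) ->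
  (forall i : 'I_4, smooth (Y i)) ->
  (forall p : pt4 R, div a b c Y p = 0) ->
  ricci_yamabe_soliton a b c (fun i p => grad a b c f i p + Y i p) lambda beta1 beta2 ->
  lambda = 0.
Proof.
move=> sA sB sC sf fE sY divY sol; pose p : pt4 R := 0.
have divX : div a b c (fun i q => grad a b c f i q + Y i q) p = 0.
  rewrite div_walkerD => [|i|i]; last exact: smooth_derivable.
    by rewrite div_grad_walker_uv // divY addr0.
  exact: derivable_grad_walker_uv.
have := ricci_yamabe_soliton_trace sol p.
rewrite scal_walker_eq0 // divX !(mulr0, addr0) => /eqP.
by rewrite eq_sym mulf_eq0 pnatr_eq0 /= oppr_eq0 mulf_eq0 pnatr_eq0 => /eqP.
Qed.
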